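(* Let $\mathbf{L}=(L,\le)$ be a finite lattice with more than two elements and let $(R,\vee,\circ)$ be a subsemiring of $(\mathrm{Res}_1(\mathbf{L}),\vee,\circ)$ such that $f_{a,0}\in R$ for all $a\in L\setminus\{1\}$, every $f\in R$ satisfies $f_{a,0}\le f$ for some $a\in L\setminus\{1\}$, and for all $a\in L\setminus\{0,1\}$, $b\in L$ there exists $f\in R$ with $f(a)=b$. Then $(R,\vee)$ has a neutral element if and only if $1$ is join-irreducible in $\mathbf{L}$. If this neutral element exists, it is right but not left absorbing in $(R,\vee,\circ)$.
   Context: $\mathrm{Res}_1(\mathbf{L})$ is the set of maps $f:L\to L$ preserving binary joins with $f(0)=0$ and $f(1)=1$, a semiring under pointwise join and composition, ordered pointwise. $f_{a,b}(x)=b$ if $x\le a$ and $1$ otherwise. $1$ is join-irreducible if $1\ne a\vee b$ for all $a,b\in L\setminus\{1\}$. An element $r$ is right absorbing if $s\circ r=r$ for all $s\in R$, left absorbing if $r\circ s=r$ for all $s\in R$. *)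

From HB Require Import structures.
From mathcomp Require Import all_boot all_order.
Set Implicit Arguments. Unset Strict Implicit. Unset Printing Implicit Defensive.
Import Order.TTheory.
Local Open Scope order_scope.

Section ResDefs.
Context {disp : Order.disp_t} {L : finTBLatticeType disp}.

Definition Res1 (f : {ffun L -> L}) : Prop :=
  [/\ forall x y : L, f (x `|` y) = f x `|` f y, f \bot = \bot & f \top = \top].

Definition fjoin (f g : {ffun L -> L}) : {ffun L -> L} := [ffun x => f x `|` g x].
Definition fcomp (s r : {ffun L -> L}) : {ffun L -> L} := [ffun x => s (r x)].

Definition fle (f g : {ffun L -> L}) : Prop := forall x, f x <= g x.

Definition fab (a b : L) : {ffun L -> L} := [ffun x => if x <= a then b else \top].

Definition subsemiring_Res1 (R : {set {ffun L -> L}}) : Prop :=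
  [/\ R != set0,
      forall f, f \in R -> Res1 f,
      forall f g, f \in R -> g \in R -> fjoin f g \in R
    & forall f g, f \in R -> g \in R -> fcomp f g \in R].

Definition join_neutral (R : {set {ffun L -> L}}) (e : {ffun L -> L}) : Prop :=
  e \in R /\ forall f, f \in R -> fjoin e f = f /\ fjoin f e = f.

Definition right_absorbing (R : {set {ffun L -> L}}) (r : {ffun L -> L}) : Prop :=
  forall s, s \in R -> fcomp s r = r.

Definition left_absorbing (R : {set {ffun L -> L}}) (r : {ffun L -> L}) : Prop :=
  forall s, s \in R -> fcomp r s = r.

Definition top_join_irreducible : Prop :=
  forall a b : L, a != \top -> b != \top -> a `|` b != \top.

End ResDefs.

From HB Require Import structures.
From mathcomp Require Import all_boot all_order.
Import Order.TTheory.
Local Open Scope order_scope.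

(* A join-neutral element e of R lies below every f_{a,0}, hence vanishes off
   1: it is the indicator of 1.  That indicator preserves binary joins exactly
   when 1 is join-irreducible, and it then equals f_{m,0} for m the join of all
   elements other than 1.  Every f in R fixes 0 and 1, so f o e = e; but if f
   sends some a with 0 < a < 1 to 1, then (e o f)(a) = 1 while e(a) = 0. *)

Section TopIndicator.
Context {disp : Order.disp_t} {L : finTBLatticeType disp}.

Definition top_indicator : {ffun L -> L} :=
  [ffun x => if x == \top then \top else \bot].

Lemma exists_bot_lt_lt_top : (2 < #|L|)%N -> exists x : L, x != \bot /\ x != \top.
Proof.
move=> L_gt2.
case: (pickP [pred x : L | (x != \bot) && (x != \top)]) => [x /andP[] | no_mid].
  by exists x.
have: (#|L| <= #|[set (\bot : L); \top]|)%N.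
  apply: subset_leq_card; apply/subsetP => x _.
  by move/negbT: (no_mid x); rewrite negb_and !negbK in_set2.
rewrite cards2; case: (_ != _); rewrite leqNgt ?L_gt2 //.
by rewrite (@ltn_trans 2%N).
Qed.

Lemma bot_neq_top : (2 < #|L|)%N -> (\bot : L) != \top.
Proof.
move=> /exists_bot_lt_lt_top [x [x_neq0 x_neq1]]; apply/eqP => bot_top.
by move: x_neq0; rewrite -lex0 bot_top lex1.
Qed.

Lemma top_indicator_join_top_irreducible :
  (\bot : L) != \top ->
  (forall x y, top_indicator (x `|` y) = top_indicator x `|` top_indicator y) ->
  top_join_irreducible (L := L).
Proof.
move=> bot_neq_top1 ind_join a b a_neq1 b_neq1; apply/eqP => ab_top.
move: (ind_join a b); rewrite !ffunE ab_top eqxx (negbTE a_neq1) (negbTE b_neq1).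
by rewrite joinxx => /esym/eqP; rewrite (negbTE bot_neq_top1).
Qed.

Lemma fab_top_indicator :
  (\bot : L) != \top -> top_join_irreducible (L := L) ->
  exists2 m : L, m != \top & fab m \bot = top_indicator.
Proof.
move=> bot_neq_top1 top_irr.
set m := \join_(x : L | x != \top) x.
have m_neq1 : m != \top by apply: (big_ind (fun y : L => y != \top)).
exists m => //; apply/ffunP => x; rewrite !ffunE; case: eqP => [->|/eqP x_neq1].
  by rewrite le1x (negbTE m_neq1).
by rewrite (joins_sup (P := fun x : L => x != \top) (fun x => x)).
Qed.

Lemma fjoin_top_indicator (f : {ffun L -> L}) :
  f \top = \top -> fjoin top_indicator f = f /\ fjoin f top_indicator = f.
Proof.
move=> f1; split; apply/ffunP => x; rewrite !ffunE;
  by case: eqP => [->|_]; rewrite ?f1 ?joinxx ?join0x ?joinx0.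
Qed.

Lemma fcomp_top_indicator (f : {ffun L -> L}) :
  Res1 f -> fcomp f top_indicator = top_indicator.
Proof. by move=> [_ f0 f1]; apply/ffunP => x; rewrite !ffunE; case: eqP. Qed.

Lemma fcomp_top_indicator_neq {f : {ffun L -> L}} {a : L} :
  (\bot : L) != \top -> a != \top -> f a = \top ->
  fcomp top_indicator f != top_indicator.
Proof.
move=> bot_neq_top1 a_neq1 fa1; apply/eqP => /(congr1 (fun g : {ffun L -> L} => g a)).
by rewrite !ffunE fa1 eqxx (negbTE a_neq1) => /eqP; rewrite eq_sym (negbTE bot_neq_top1).
Qed.

Lemma join_neutral_top_indicator {R : {set {ffun L -> L}}} {e : {ffun L -> L}} :
  subsemiring_Res1 R ->
  (forall a : L, a != \top -> fab a \bot \in R) ->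
  join_neutral R e -> e = top_indicator.
Proof.
move=> [_ R_res _ _] fab_in [eR e_neutral]; apply/ffunP => x; rewrite ffunE.
case: eqP => [->|/eqP x_neq1]; first by case: (R_res _ eR).
have /(congr1 (fun g : {ffun L -> L} => g x)) := (e_neutral _ (fab_in _ x_neq1)).1.
by rewrite !ffunE lexx joinx0.
Qed.

End TopIndicator.

Theorem proposition7p1 (disp : Order.disp_t) (L : finTBLatticeType disp)
  (R : {set {ffun L -> L}}) :
  (2 < #|L|)%N ->
  subsemiring_Res1 R ->
  (forall a : L, a != \top -> fab a \bot \in R) ->
  (forall f, f \in R -> exists a : L, a != \top /\ fle (fab a \bot) f) ->
  (forall a b : L, a != \bot -> a != \top -> exists f, f \in R /\ f a = b) ->
  ((exists e, join_neutral R e) <-> top_join_irreducible (L := L)) /\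
  (forall e, join_neutral R e -> right_absorbing R e /\ ~ left_absorbing R e).
Proof.
move=> L_gt2 R_sub fab_in _ R_hits.
have bot_neq_top1 := bot_neq_top L_gt2.
have [_ R_res _ _] := R_sub.
have neutral_ind := join_neutral_top_indicator R_sub fab_in.
split; [split|].
- move=> [e e_neutral]; apply: top_indicator_join_top_irreducible => //.
  rewrite -(neutral_ind _ e_neutral); have [eR _] := e_neutral.
  by case: (R_res _ eR).
- move=> /(fab_top_indicator bot_neq_top1) [m m_neq1 fab_m]; exists top_indicator.
  split; first by rewrite -fab_m fab_in.
  by move=> f /R_res [_ _ f1]; apply: fjoin_top_indicator.
- move=> e /neutral_ind ->; split=> [s /R_res|ind_left_abs].
    exact: fcomp_top_indicator.
  have [a [a_neq0 a_neq1]] := exists_bot_lt_lt_top L_gt2.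
  have [s [sR sa1]] := R_hits a \top a_neq0 a_neq1.
  by move: (fcomp_top_indicator_neq bot_neq_top1 a_neq1 sa1); rewrite (ind_left_abs _ sR) eqxx.
Qed.
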